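(* Let $G$ be a po-group. The po-group $\mathbb Z \overrightarrow{\times} G$ satisfies RDP$_1$ if and only if $G$ is directed and satisfies RDP$_1$.
   Context: A po-group is a (not necessarily Abelian, additively written) group with a partial order $\le$ such that $a\le b$ implies $x+a+y\le x+b+y$; $G^+$ is its positive cone; $G$ is directed if any two elements have a common upper bound. $\mathbb Z \overrightarrow{\times} G$ is the group $\mathbb Z\times G$ (componentwise operation) with the lexicographic order: $(m,g)\le(n,h)$ iff $m<n$, or $m=n$ and $g\le h$. RDP$_1$: for all $a_1,a_2,b_1,b_2$ in the positive cone with $a_1+a_2=b_1+b_2$ there are positive $c_{11},c_{12},c_{21},c_{22}$ with $a_1=c_{11}+c_{12}$, $a_2=c_{21}+c_{22}$, $b_1=c_{11}+c_{21}$, $b_2=c_{12}+c_{22}$, such that $0\le x\le c_{12}$ and $0\le y\le c_{21}$ imply $x+y=y+x$. *)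

From Stdlib Require Import ZArith.

Record POGroup := {
  car :> Type;
  add : car -> car -> car;
  zero : car;
  opp : car -> car;
  le : car -> car -> Prop;
  addA : forall x y z, add x (add y z) = add (add x y) z;
  add0l : forall x, add zero x = x;
  add0r : forall x, add x zero = x;
  addNl : forall x, add (opp x) x = zero;
  addNr : forall x, add x (opp x) = zero;
  le_refl : forall x, le x x;
  le_trans : forall x y z, le x y -> le y z -> le x z;
  le_anti : forall x y, le x y -> le y x -> x = y;
  le_compat : forall a b x y, le a b -> le (add (add x a) y) (add (add x b) y)
}.

Arguments add {p}.
Arguments zero {p}.
Arguments opp {p}.
Arguments le {p}.

Definition directed (G : POGroup) : Prop :=
  forall a b : G, exists c : G, le a c /\ le b c.

Definition RDP1 {T : Type} (add : T -> T -> T) (zero : T) (le : T -> T -> Prop)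
  : Prop :=
  forall a1 a2 b1 b2 : T,
    le zero a1 -> le zero a2 -> le zero b1 -> le zero b2 ->
    add a1 a2 = add b1 b2 ->
    exists c11 c12 c21 c22 : T,
      le zero c11 /\ le zero c12 /\ le zero c21 /\ le zero c22 /\
      a1 = add c11 c12 /\ a2 = add c21 c22 /\
      b1 = add c11 c21 /\ b2 = add c12 c22 /\
      (forall x y : T, le zero x -> le x c12 -> le zero y -> le y c21 ->
         add x y = add y x).

Definition RDP1_pog (G : POGroup) : Prop := RDP1 (@add G) (@zero G) (@le G).

(** The lexicographic product Z ->x G: carrier Z * G, componentwise group
    operation, and (m,g) <= (n,h) iff m < n, or m = n and g <= h. *)
Definition lex_add (G : POGroup) (u v : Z * G) : Z * G :=
  ((fst u + fst v)%Z, add (snd u) (snd v)).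
Definition lex_zero (G : POGroup) : Z * G := (0%Z, zero).
Definition lex_le (G : POGroup) (u v : Z * G) : Prop :=
  (fst u < fst v)%Z \/ (fst u = fst v /\ le (snd u) (snd v)).

From Stdlib Require Import ZArith Lia.

(** When [m1 <> n1] one can
    route everything through a single level-changing entry and take the corner
    [c12] (or [c21]) to be [0], so nothing needs to commute.  When [m1 = n1],
    the two rows share the level structure; directedness provides a common
    lower bound [d] of [a1, b1] (or of [a2, b2]) and an upper bound over it,
    which turns the problem into an instance of RDP_1 in [G] whose corner
    entries [c12, c21] sit at level [0].  Conversely, RDP_1 for
    [(1,a) + (1,a) = (1,b) + (1,-b+a+a)] forces some entry to have level [0],
    which yields a common lower bound of [a] and [b], whence directedness. *)

Definition commute_below {T : Type} (add : T -> T -> T) (zero : T)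
  (le : T -> T -> Prop) (c d : T) : Prop :=
  forall x y : T, le zero x -> le x c -> le zero y -> le y d -> add x y = add y x.

Definition rdp1_decomposition {T : Type} (add : T -> T -> T) (zero : T)
  (le : T -> T -> Prop) (a1 a2 b1 b2 : T) : Prop :=
  exists c11 c12 c21 c22 : T,
    le zero c11 /\ le zero c12 /\ le zero c21 /\ le zero c22 /\
    a1 = add c11 c12 /\ a2 = add c21 c22 /\
    b1 = add c11 c21 /\ b2 = add c12 c22 /\
    commute_below add zero le c12 c21.

Lemma commute_below_sym {T : Type} (add : T -> T -> T) zero le (c d : T) :
  commute_below add zero le c d -> commute_below add zero le d c.
Proof. intros H x y hx1 hx2 hy1 hy2. symmetry. apply H; assumption. Qed.

Lemma rdp1_decomposition_sym {T : Type} (add : T -> T -> T) zero le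
    (a1 a2 b1 b2 : T) :
  rdp1_decomposition add zero le a1 a2 b1 b2 ->
  rdp1_decomposition add zero le b1 b2 a1 a2.
Proof.
  intros (c11 & c12 & c21 & c22 & P11 & P12 & P21 & P22 & E1 & E2 & E3 & E4 & Hc).
  exists c11, c21, c12, c22.
  repeat split; try assumption. apply commute_below_sym. exact Hc.
Qed.

Section POGroupTheory.

Variable G : POGroup.
Implicit Types a b c d p q u x y : G.

Lemma addKl x y : add (opp x) (add x y) = y.
Proof. rewrite addA, addNl, add0l. reflexivity. Qed.

Lemma addNKl x y : add x (add (opp x) y) = y.
Proof. rewrite addA, addNr, add0l. reflexivity. Qed.

Lemma addKr x y : add (add y x) (opp x) = y.
Proof. rewrite <- addA, addNr, add0r. reflexivity. Qed.

Lemma addNKr x y : add (add y (opp x)) x = y.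
Proof. rewrite <- addA, addNl, add0r. reflexivity. Qed.

Lemma addIl x y z : add x y = add x z -> y = z.
Proof. intro H. rewrite <- (addKl x y), H, addKl. reflexivity. Qed.

Lemma addIr x y z : add y x = add z x -> y = z.
Proof. intro H. rewrite <- (addKr x y), H, addKr. reflexivity. Qed.

Lemma oppK a : opp (opp a) = a.
Proof. rewrite <- (add0r G (opp (opp a))), <- (addNl G a), addA, addNl, add0l. reflexivity. Qed.

Lemma commute_oppr x y : add x y = add y x -> add (opp y) x = add x (opp y).
Proof.
  intro H. transitivity (add (add (opp y) (add x y)) (opp y)).
  - rewrite addA, addKr. reflexivity.
  - rewrite H, addKl. reflexivity.
Qed.

Lemma le_add2l a b x : le a b -> le (add x a) (add x b).
Proof. intro H. pose proof (le_compat G a b x zero H) as K. rewrite !add0r in K. exact K. Qed.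

Lemma le_add2r a b y : le a b -> le (add a y) (add b y).
Proof. intro H. pose proof (le_compat G a b zero y H) as K. rewrite !add0l in K. exact K. Qed.

Lemma le_addr x c : le zero c -> le x (add x c).
Proof. intro H. rewrite <- (add0r G x) at 1. apply le_add2l. exact H. Qed.

Lemma le_addl x c : le zero c -> le x (add c x).
Proof. intro H. rewrite <- (add0l G x) at 1. apply le_add2r. exact H. Qed.

Lemma subl_ge0 a u : le a u -> le zero (add (opp a) u).
Proof. intro H. rewrite <- (addNl G a). apply le_add2l. exact H. Qed.

Lemma subr_ge0 a u : le a u -> le zero (add u (opp a)).
Proof. intro H. rewrite <- (addNr G a). apply le_add2r. exact H. Qed.

Lemma le_opp x y : le x y -> le (opp y) (opp x).
Proof.
  intro H. pose proof (le_compat G x y (opp y) (opp x) H) as K.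
  rewrite <- addA, addNr, add0r, addNl, add0l in K. exact K.
Qed.

Lemma le_oppl x y : le (opp x) y -> le (opp y) x.
Proof. intro H. rewrite <- (oppK x). apply le_opp. exact H. Qed.

Lemma directed_lower_bound :
  directed G -> forall a b, exists d, le d a /\ le d b.
Proof.
  intros H a b. destruct (H (opp a) (opp b)) as [c [ha hb]].
  exists (opp c). split; apply le_oppl; assumption.
Qed.

Lemma lower_bound_directed :
  (forall a b, exists d, le d a /\ le d b) -> directed G.
Proof.
  intros H a b. destruct (H (opp a) (opp b)) as [d [ha hb]].
  exists (opp d). split; [rewrite <- (oppK a) | rewrite <- (oppK b)];
    apply le_opp; assumption.
Qed.

Lemma add_prefix_swap p x y a' b' :
  add x y = add y x -> add (add p x) a' = add (add p y) b' ->
  b' = add x (add (opp y) a').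
Proof.
  intros Hxy E. rewrite <- !addA in E. apply addIl in E.
  rewrite addA, <- commute_oppr, <- addA, E, addKl by exact Hxy. reflexivity.
Qed.

Lemma add_suffix_swap q x y a' b' :
  add x y = add y x -> add a' (add x q) = add b' (add y q) ->
  b' = add (add a' (opp y)) x.
Proof.
  intros Hxy E. rewrite !addA in E. apply addIr in E.
  rewrite <- addA, commute_oppr, addA, E, addKr by exact Hxy. reflexivity.
Qed.

Hypothesis Hdir : directed G.
Hypothesis HR : RDP1_pog G.

Lemma RDP1_common_lower_l a b d :
  le d a -> le d b ->
  exists c11 c12 c21,
    le zero c11 /\ le zero c12 /\ le zero c21 /\
    a = add d (add c11 c12) /\ b = add d (add c11 c21) /\
    commute_below add zero le c12 c21.
Proof.
  intros hda hdb.
  destruct (Hdir (add (opp d) a) (add (opp d) b)) as [u [hau hbu]].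
  destruct (HR (add (opp d) a) (add (opp (add (opp d) a)) u)
               (add (opp d) b) (add (opp (add (opp d) b)) u))
    as (c11 & c12 & c21 & c22 & P11 & P12 & P21 & _ & Ea & _ & Eb & _ & Hc);
    try (apply subl_ge0; assumption).
  { rewrite !addNKl. reflexivity. }
  exists c11, c12, c21.
  repeat split; try assumption.
  - rewrite <- Ea, addNKl. reflexivity.
  - rewrite <- Eb, addNKl. reflexivity.
Qed.

Lemma RDP1_common_lower_r a b d :
  le d a -> le d b ->
  exists c12 c21 c22,
    le zero c12 /\ le zero c21 /\ le zero c22 /\
    a = add (add c21 c22) d /\ b = add (add c12 c22) d /\
    commute_below add zero le c12 c21.
Proof.
  intros hda hdb.
  destruct (Hdir (add a (opp d)) (add b (opp d))) as [u [hau hbu]].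
  destruct (HR (add u (opp (add a (opp d)))) (add a (opp d))
               (add u (opp (add b (opp d)))) (add b (opp d)))
    as (c11 & c12 & c21 & c22 & _ & P12 & P21 & P22 & _ & Ea & _ & Eb & Hc);
    try (apply subr_ge0; assumption).
  { rewrite !addNKr. reflexivity. }
  exists c12, c21, c22.
  repeat split; try assumption.
  - rewrite <- Ea, addNKr. reflexivity.
  - rewrite <- Eb, addNKr. reflexivity.
Qed.

End POGroupTheory.

Section LexProduct.

Variable G : POGroup.
Implicit Types a b c d : G.

Local Notation lex_ge0 u := (lex_le G (lex_zero G) u).
Local Notation lex_decomposition :=
  (rdp1_decomposition (lex_add G) (lex_zero G) (lex_le G)).

Lemma lex_add_pair m n a b : lex_add G (m, a) (n, b) = ((m + n)%Z, add a b).
Proof. reflexivity. Qed.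

Lemma lex_ge0E m a : lex_ge0 (m, a) <-> (0 < m)%Z \/ (m = 0%Z /\ le zero a).
Proof.
  unfold lex_le, lex_zero; simpl.
  split; intros [h | [<- h]]; auto.
Qed.

Lemma lex_ge0_level m a : lex_ge0 (m, a) -> (0 <= m)%Z.
Proof. rewrite lex_ge0E. intros [h | [h _]]; lia. Qed.

Lemma lex_ge0_level0 a : lex_ge0 (0%Z, a) <-> le zero a.
Proof. rewrite lex_ge0E. split; [intros [h | [_ h]]; [lia | exact h] | auto]. Qed.

Lemma lex_gt0 m a : (0 < m)%Z -> lex_ge0 (m, a).
Proof. intro h. apply lex_ge0E. left. exact h. Qed.

Lemma lex_ge0_addr m d c : lex_ge0 (m, d) -> le zero c -> lex_ge0 (m, add d c).
Proof.
  rewrite !lex_ge0E. intros [h | [h hd]] hc; [left; exact h | right].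
  split; [exact h | apply (le_trans G _ d); [exact hd | apply le_addr; exact hc]].
Qed.

Lemma lex_ge0_addl m d c : lex_ge0 (m, d) -> le zero c -> lex_ge0 (m, add c d).
Proof.
  rewrite !lex_ge0E. intros [h | [h hd]] hc; [left; exact h | right].
  split; [exact h | apply (le_trans G _ d); [exact hd | apply le_addl; exact hc]].
Qed.

Lemma lex_commute_level0 c d :
  commute_below add zero le c d ->
  commute_below (lex_add G) (lex_zero G) (lex_le G) (0%Z, c) (0%Z, d).
Proof.
  intros H [p x] [q y]; unfold lex_le, lex_zero; simpl.
  intros [h1 | [h1 h1']] [h2 | [h2 h2']] [h3 | [h3 h3']] [h4 | [h4 h4']]; try lia.
  subst. rewrite !lex_add_pair. f_equal. apply H; assumption.
Qed.

(* Everything between [0] and [(0,0)] is [0], which commutes with anything. *)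
Lemma lex_commute_zero D :
  commute_below (lex_add G) (lex_zero G) (lex_le G) (lex_zero G) D.
Proof.
  intros [p x] Y Hx1 Hx2 _ _.
  assert (Hx : (p, x) = lex_zero G).
  { revert Hx1 Hx2. unfold lex_le, lex_zero; simpl.
    intros [h1 | [h1 h1']] [h2 | [h2 h2']]; try lia.
    subst. f_equal. apply le_anti; assumption. }
  rewrite Hx. destruct Y as [q y].
  unfold lex_zero. rewrite !lex_add_pair, add0l, add0r. f_equal. lia.
Qed.

Lemma lex_decomposition_lt m1 m2 n1 n2 a1 a2 b1 b2 :
  lex_ge0 (m1, a1) -> lex_ge0 (n2, b2) -> (m1 < n1)%Z ->
  lex_add G (m1, a1) (m2, a2) = lex_add G (n1, b1) (n2, b2) ->
  lex_decomposition (m1, a1) (m2, a2) (n1, b1) (n2, b2).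
Proof.
  intros P1 P4 Hlt E. rewrite !lex_add_pair in E. injection E as Em Ea.
  exists (m1, a1), (lex_zero G), ((n1 - m1)%Z, add (opp a1) b1), (n2, b2).
  unfold lex_zero. rewrite !lex_add_pair.
  repeat split; try assumption.
  - apply lex_ge0_level0, le_refl.
  - apply lex_gt0. lia.
  - apply pair_equal_spec; split; [lia | rewrite add0r; reflexivity].
  - apply pair_equal_spec; split; [lia | rewrite <- addA, <- Ea, addKl; reflexivity].
  - apply pair_equal_spec; split; [lia | rewrite addNKl; reflexivity].
  - f_equal; rewrite add0l; reflexivity.
  - apply lex_commute_zero.
Qed.

Lemma lex_decomposition_level0 a1 a2 b1 b2 :
  RDP1_pog G -> le zero a1 -> le zero a2 -> le zero b1 -> le zero b2 ->
  add a1 a2 = add b1 b2 ->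
  lex_decomposition (0%Z, a1) (0%Z, a2) (0%Z, b1) (0%Z, b2).
Proof.
  intros HR P1 P2 P3 P4 E.
  destruct (HR a1 a2 b1 b2 P1 P2 P3 P4 E)
    as (c11 & c12 & c21 & c22 & Q11 & Q12 & Q21 & Q22 & E1 & E2 & E3 & E4 & Hc).
  exists (0%Z, c11), (0%Z, c12), (0%Z, c21), (0%Z, c22).
  rewrite !lex_add_pair.
  repeat split; try (apply lex_ge0_level0; assumption); try (f_equal; assumption).
  apply lex_commute_level0. exact Hc.
Qed.

Section Directed.

Hypothesis Hdir : directed G.
Hypothesis HR : RDP1_pog G.

Lemma lex_common_lower_bound m a b :
  lex_ge0 (m, a) -> lex_ge0 (m, b) ->
  exists d, le d a /\ le d b /\ lex_ge0 (m, d).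
Proof.
  rewrite !lex_ge0E. intros [h | [-> ha]] hb.
  - destruct (directed_lower_bound G Hdir a b) as [d [hda hdb]].
    exists d. split; [exact hda | split; [exact hdb | apply lex_gt0; exact h]].
  - destruct hb as [hb | [_ hb]]; [lia |].
    exists zero. split; [exact ha | split; [exact hb | apply lex_ge0_level0, le_refl]].
Qed.

Lemma lex_decomposition_eq_r m1 m2 a1 a2 b1 b2 :
  lex_ge0 (m1, a1) -> lex_ge0 (m1, b1) -> (0 < m2)%Z ->
  add a1 a2 = add b1 b2 ->
  lex_decomposition (m1, a1) (m2, a2) (m1, b1) (m2, b2).
Proof.
  intros P1 P3 Hm2 Ea.
  destruct (lex_common_lower_bound m1 a1 b1 P1 P3) as (d & hda & hdb & Pd).
  destruct (RDP1_common_lower_l G Hdir HR a1 b1 d hda hdb)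
    as (c11 & c12 & c21 & Q11 & Q12 & Q21 & E1 & E3 & Hc).
  rewrite addA in E1, E3.
  exists (m1, add d c11), (0%Z, c12), (0%Z, c21), (m2, add (opp c21) a2).
  rewrite !lex_add_pair.
  repeat split.
  - apply lex_ge0_addr; assumption.
  - apply lex_ge0_level0. exact Q12.
  - apply lex_ge0_level0. exact Q21.
  - apply lex_gt0. exact Hm2.
  - apply pair_equal_spec; split; [lia | exact E1].
  - apply pair_equal_spec; split; [lia | rewrite addNKl; reflexivity].
  - apply pair_equal_spec; split; [lia | exact E3].
  - apply pair_equal_spec; split; [lia |].
    apply (add_prefix_swap G (add d c11) c12 c21 a2 b2).
    + apply Hc; auto using le_refl.
    + rewrite <- E1, <- E3. exact Ea.
  - apply lex_commute_level0. exact Hc.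
Qed.

Lemma lex_decomposition_eq_l m1 m2 a1 a2 b1 b2 :
  (0 < m1)%Z -> lex_ge0 (m2, a2) -> lex_ge0 (m2, b2) ->
  add a1 a2 = add b1 b2 ->
  lex_decomposition (m1, a1) (m2, a2) (m1, b1) (m2, b2).
Proof.
  intros Hm1 P2 P4 Ea.
  destruct (lex_common_lower_bound m2 a2 b2 P2 P4) as (d & hda & hdb & Pd).
  destruct (RDP1_common_lower_r G Hdir HR a2 b2 d hda hdb)
    as (c12 & c21 & c22 & Q12 & Q21 & Q22 & E2 & E4 & Hc).
  rewrite <- addA in E2, E4.
  exists (m1, add a1 (opp c12)), (0%Z, c12), (0%Z, c21), (m2, add c22 d).
  rewrite !lex_add_pair.
  repeat split.
  - apply lex_gt0. exact Hm1.
  - apply lex_ge0_level0. exact Q12.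
  - apply lex_ge0_level0. exact Q21.
  - apply lex_ge0_addl; assumption.
  - apply pair_equal_spec; split; [lia | rewrite addNKr; reflexivity].
  - apply pair_equal_spec; split; [lia | exact E2].
  - apply pair_equal_spec; split; [lia |].
    apply (add_suffix_swap G (add c22 d) c21 c12 a1 b1).
    + symmetry. apply Hc; auto using le_refl.
    + rewrite <- E2, <- E4. exact Ea.
  - apply pair_equal_spec; split; [lia | exact E4].
  - apply lex_commute_level0. exact Hc.
Qed.

Lemma lex_RDP1 : RDP1 (lex_add G) (lex_zero G) (lex_le G).
Proof.
  intros [m1 a1] [m2 a2] [n1 b1] [n2 b2] P1 P2 P3 P4 E.
  pose proof (lex_ge0_level _ _ P2). pose proof (lex_ge0_level _ _ P4).
  destruct (Z.lt_trichotomy m1 n1) as [Hlt | [<- | Hgt]].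
  - apply lex_decomposition_lt; assumption.
  - rewrite !lex_add_pair in E. injection E as Em Ea.
    assert (m2 = n2) as <- by lia.
    destruct (Z.lt_trichotomy 0 m1) as [Hm1 | [<- | Hm1]];
      [apply lex_decomposition_eq_l; assumption | | pose proof (lex_ge0_level _ _ P1); lia].
    destruct (Z.lt_trichotomy 0 m2) as [Hm2 | [<- | Hm2]];
      [apply lex_decomposition_eq_r; assumption | | lia].
    apply lex_ge0_level0 in P1, P2, P3, P4.
    apply lex_decomposition_level0; assumption.
  - apply rdp1_decomposition_sym.
    apply lex_decomposition_lt; [assumption | assumption | lia | symmetry; exact E].
Qed.

End Directed.

Lemma lex_RDP1_restrict :
  RDP1 (lex_add G) (lex_zero G) (lex_le G) -> RDP1_pog G.
Proof.
  intros H a1 a2 b1 b2 P1 P2 P3 P4 E.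
  destruct (H (0%Z, a1) (0%Z, a2) (0%Z, b1) (0%Z, b2))
    as ([q11 c11] & [q12 c12] & [q21 c21] & [q22 c22] &
        Q11 & Q12 & Q21 & Q22 & E1 & E2 & E3 & E4 & Hc);
    try (apply lex_ge0_level0; assumption).
  { rewrite !lex_add_pair, E. reflexivity. }
  rewrite lex_add_pair in E1, E2, E3, E4.
  injection E1 as E1q E1. injection E2 as E2q E2.
  injection E3 as E3q E3. injection E4 as E4q E4.
  pose proof (lex_ge0_level _ _ Q11). pose proof (lex_ge0_level _ _ Q12).
  pose proof (lex_ge0_level _ _ Q21). pose proof (lex_ge0_level _ _ Q22).
  assert (q11 = 0%Z) as -> by lia. assert (q12 = 0%Z) as -> by lia.
  assert (q21 = 0%Z) as -> by lia. assert (q22 = 0%Z) as -> by lia.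
  apply lex_ge0_level0 in Q11, Q12, Q21, Q22.
  exists c11, c12, c21, c22.
  repeat split; try assumption.
  intros x y hx1 hx2 hy1 hy2.
  assert (K : lex_add G (0%Z, x) (0%Z, y) = lex_add G (0%Z, y) (0%Z, x)).
  { apply Hc; unfold lex_le; simpl; right; split; auto. }
  rewrite !lex_add_pair in K. injection K as K. exact K.
Qed.

(* Decompose [(1,a) + (1,a) = (1,b) + (1,-b+a+a)]: the level of [c11] is [0] or
   [1], and in either case some entry at level [0] lies below both [a] and [b]. *)
Lemma lex_RDP1_lower_bound :
  RDP1 (lex_add G) (lex_zero G) (lex_le G) ->
  forall a b : G, exists d, le d a /\ le d b.
Proof.
  intros H a b.
  destruct (H (1%Z, a) (1%Z, a) (1%Z, b) (1%Z, add (opp b) (add a a)))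
    as ([q11 c11] & [q12 c12] & [q21 c21] & [q22 c22] &
        Q11 & Q12 & Q21 & Q22 & E1 & E2 & E3 & _ & _);
    try (apply lex_gt0; lia).
  { rewrite !lex_add_pair, addNKl. reflexivity. }
  rewrite lex_add_pair in E1, E2, E3.
  injection E1 as E1q E1. injection E2 as E2q E2. injection E3 as E3q E3.
  pose proof (lex_ge0_level _ _ Q11). pose proof (lex_ge0_level _ _ Q12).
  pose proof (lex_ge0_level _ _ Q21). pose proof (lex_ge0_level _ _ Q22).
  destruct (Z.eq_dec q11 0) as [-> | Hq].
  - assert (q22 = 0%Z) as -> by lia.
    apply lex_ge0_level0 in Q11, Q22.
    exists c21. rewrite E2, E3. split; [apply le_addr | apply le_addl]; assumption.
  - assert (q12 = 0%Z) as -> by lia. assert (q21 = 0%Z) as -> by lia.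
    apply lex_ge0_level0 in Q12, Q21.
    exists c11. rewrite E1, E3. split; apply le_addr; assumption.
Qed.

End LexProduct.

Theorem theorem3p7 (G : POGroup) :
  RDP1 (lex_add G) (lex_zero G) (lex_le G) <-> (directed G /\ RDP1_pog G).
Proof.
  split.
  - intro H. split.
    + apply lower_bound_directed, lex_RDP1_lower_bound. exact H.
    + apply lex_RDP1_restrict. exact H.
  - intros [Hdir HR]. apply lex_RDP1; assumption.
Qed.
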